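(* Fix $a\in\mathbb{R}$. For delays $T>0$ with $aT<1$, let $k_u(T)$ denote the unique solution $k>|a|$ of $$T\sqrt{k^2-a^2}=\arccos\!\left(\frac{a}{k}\right).$$ Then $T\mapsto k_u(T)$ is decreasing and convex. Moreover, if $a>0$ then $$\lim_{T\to 1/a}k_u(T)=a,\qquad \lim_{T\to0^+}k_u(T)=+\infty,$$ and if $a<0$ then $$\lim_{T\to+\infty}k_u(T)=|a|,\qquad \lim_{T\to0^+}k_u(T)=+\infty .$$
   Context: Consider the scalar retarded system $\dot x(t)=a x(t)-k x(t-T)$ with $a,k\in\mathbb{R}$ and constant delay $T>0$. For $aT<1$, the set of gains $k$ for which this system is exponentially stable is exactly the open interval $(a,k_u)$, where $k_u$ is defined as in the claim. *)

From Stdlib Require Export Reals.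
From Coquelicot Require Export Coquelicot.
Open Scope R_scope.

Definition admissible (a T : R) : Prop := 0 < T /\ a * T < 1.

Definition ku_spec (a T k : R) : Prop :=
  Rabs a < k /\ T * sqrt (k ^ 2 - a ^ 2) = acos (a / k).

From Stdlib Require Import Reals Lra Psatz.
From Coquelicot Require Import Coquelicot.
Open Scope R_scope.

(* The solution k_u(T) is the inverse of the delay function
   k |-> acos (a/k) / sqrt (k^2 - a^2) on (|a|, +oo).  In the polar coordinates
   a = k cos th, sqrt (k^2 - a^2) = k sin th with 0 < th < PI, its first derivative is
   (sin th cos th - th) / (k^2 sin^3 th) < 0 and its second derivative is
   (th (3 - sin^2 th) - sin th cos th (3 + sin^2 th)) / (k^3 sin^5 th) > 0, both signs
   coming from th cos th < sin th < th.  So the delay function is a decreasing convex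
   bijection onto the admissible delays, and its inverse k_u is decreasing and convex.
   The limits of k_u follow from 0 < delay, from 1/k < delay, and, for a > 0, from
   delay < 1/a. *)

Lemma lt_of_derive_pos (f df : R -> R) x y :
  x < y -> (forall z, x <= z <= y -> is_derive f z (df z)) ->
  (forall z, x < z < y -> 0 < df z) -> f x < f y.
Proof.
  intros Hxy Hd Hpos.
  destruct (MVT_cor2 f df x y Hxy) as [c [Hf Hc]].
  - intros z Hz. apply is_derive_Reals, Hd, Hz.
  - specialize (Hpos c Hc). nra.
Qed.

Lemma convex_of_derive_increasing (f df : R -> R) l :
  (forall z, l < z -> is_derive f z (df z)) ->
  (forall u v, l < u -> u < v -> df u < df v) ->
  forall x y t, l < x -> l < y -> 0 <= t <= 1 ->
  f (t * x + (1 - t) * y) <= t * f x + (1 - t) * f y.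
Proof.
  intros Hd Hmon.
  assert (Hmvt : forall x y, l < x -> x < y ->
            exists c, x < c < y /\ f y - f x = df c * (y - x)).
  { intros x y Hx Hxy. destruct (MVT_cor2 f df x y Hxy) as [c [Hf Hc]].
    - intros z Hz. apply is_derive_Reals, Hd. lra.
    - exists c. auto. }
  assert (Hlt : forall x y t, l < x -> x < y -> 0 < t < 1 ->
            f (t * x + (1 - t) * y) <= t * f x + (1 - t) * f y).
  { intros x y t Hx Hxy Ht. set (z := t * x + (1 - t) * y).
    assert (Hz : x < z < y) by (unfold z; nra).
    destruct (Hmvt x z) as [c1 [Hc1 Hf1]]; try lra.
    destruct (Hmvt z y) as [c2 [Hc2 Hf2]]; try lra.
    assert (Hc : df c1 < df c2) by (apply Hmon; lra).
    assert (Ez1 : z - x = (1 - t) * (y - x)) by (unfold z; ring).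
    assert (Ez2 : y - z = t * (y - x)) by (unfold z; ring).
    rewrite Ez1 in Hf1. rewrite Ez2 in Hf2.
    assert (0 < t * (1 - t) * (y - x)) by (apply Rmult_lt_0_compat; nra).
    nra. }
  intros x y t Hx Hy Ht.
  destruct (Req_dec t 0) as [->|Ht0].
  { replace (0 * x + (1 - 0) * y) with y by ring. lra. }
  destruct (Req_dec t 1) as [->|Ht1].
  { replace (1 * x + (1 - 1) * y) with x by ring. lra. }
  destruct (Rtotal_order x y) as [Hxy|[<-|Hxy]].
  - apply Hlt; lra.
  - replace (t * x + (1 - t) * x) with x by ring. lra.
  -     replace (t * x + (1 - t) * y) with ((1 - t) * y + (1 - (1 - t)) * x) by ring.
    replace (t * f x + (1 - t) * f y) with ((1 - t) * f y + (1 - (1 - t)) * f x) by ring.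
    apply Hlt; lra.
Qed.

Lemma x_cos_lt_sin th : 0 < th < PI -> th * cos th < sin th.
Proof.
  intros Hth.
  assert (Hd : forall z, is_derive (fun x => sin x - x * cos x) z (z * sin z))
    by (intros z; auto_derive; auto; ring).
  assert (Hpos : forall z, 0 < z < th -> 0 < z * sin z).
  { intros z Hz. apply Rmult_lt_0_compat; [lra | apply sin_gt_0; lra]. }
  pose proof (lt_of_derive_pos _ _ 0 th ltac:(lra) (fun z _ => Hd z) Hpos) as K.
  simpl in K. rewrite sin_0, Rmult_0_l in K. lra.
Qed.

Lemma delay''_numerator_pos th : 0 < th < PI ->
  sin th * cos th * (3 + sin th ^ 2) < th * (3 - sin th ^ 2).
Proof.
  intros Hth.
  set (h x := x * (3 - sin x ^ 2) - sin x * cos x * (3 + sin x ^ 2)).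
  assert (Hd : forall z, is_derive h z (2 * sin z * (sin z + 2 * sin z ^ 3 - z * cos z))).
  { intros z. unfold h. auto_derive; auto.
    (* the derivative simplifies only modulo sin^2 + cos^2 = 1 *)
    pose proof (sin2_cos2 z) as E. unfold Rsqr in E.
    transitivity (2 * sin z * (sin z + 2 * sin z ^ 3 - z * cos z)
       - 3 * (1 + sin z ^ 2) * (sin z * sin z + cos z * cos z - 1)); [ring|].
    rewrite E. ring. }
  assert (Hpos : forall z, 0 < z < th ->
                   0 < 2 * sin z * (sin z + 2 * sin z ^ 3 - z * cos z)).
  { intros z Hz. assert (0 < sin z) by (apply sin_gt_0; lra).
    pose proof (x_cos_lt_sin z ltac:(lra)).
    assert (0 < sin z ^ 3) by (apply pow_lt; lra).
    apply Rmult_lt_0_compat; lra. }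
  pose proof (lt_of_derive_pos h _ 0 th ltac:(lra) (fun z _ => Hd z) Hpos) as K.
  unfold h in K. rewrite sin_0 in K. nra.
Qed.

Definition angle (a k : R) := acos (a / k).
Definition side (a k : R) := sqrt (k ^ 2 - a ^ 2).

Definition delay (a k : R) := angle a k / side a k.

(* The two derivatives of [delay a] in the raw form produced by the quotient rule:
   in this form they are checked by [field] without any trigonometric identity. *)
Definition delay' (a k : R) := a / (k * side a k ^ 2) - angle a k * k / side a k ^ 3.
Definition delay'' (a k : R) :=
  - a / (k ^ 2 * side a k ^ 2) - 3 * a / side a k ^ 4
  - angle a k / side a k ^ 3 + 3 * angle a k * k ^ 2 / side a k ^ 5.

Lemma ku_spec_iff a T k : ku_spec a T k <-> Rabs a < k /\ delay a k = T.
Proof.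
  unfold ku_spec, delay, angle, side. split; intros [Hk E]; split; auto;
  assert (0 < sqrt (k ^ 2 - a ^ 2))
    by (apply sqrt_lt_R0; pose proof (Rabs_def2 _ _ Hk); nra);
  rewrite <- E; field; lra.
Qed.

Section Polar.
Variables a k : R.
Hypothesis Hk : Rabs a < k.

Lemma gain_bounds : - k < a < k /\ 0 < k.
Proof. destruct (Rabs_def2 _ _ Hk). pose proof (Rabs_pos a). lra. Qed.

Lemma ratio_bounds : -1 < a / k < 1.
Proof.
  destruct gain_bounds as [[Hl Hr] Hk0].
  split; apply Rmult_lt_reg_r with k; auto; unfold Rdiv;
  rewrite Rmult_assoc, Rinv_l by lra; lra.
Qed.

Lemma side_pos : 0 < side a k.
Proof. destruct gain_bounds. apply sqrt_lt_R0. nra. Qed.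

Lemma angle_range : 0 < angle a k < PI.
Proof. apply acos_bound_lt, ratio_bounds. Qed.

Lemma polar : exists th, 0 < th < PI /\ angle a k = th /\
  side a k = k * sin th /\ a = k * cos th.
Proof.
  destruct gain_bounds as [Hak Hk0]. pose proof ratio_bounds as Hr.
  exists (angle a k). split; [apply angle_range|]. split; [reflexivity|]. split.
  - unfold side, angle. rewrite sin_acos by lra.
    replace (k ^ 2 - a ^ 2) with (k ^ 2 * (1 - (a / k)²)) by (unfold Rsqr; field; lra).
    rewrite sqrt_mult_alt, sqrt_pow2 by (lra || nra). reflexivity.
  - unfold angle. rewrite cos_acos by lra. field. lra.
Qed.

Lemma is_derive_side : is_derive (side a) k (k / side a k).
Proof.
  destruct gain_bounds. pose proof side_pos. unfold side in *.
  auto_derive; [nra|].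
  replace (k * (k * 1) + - (a * (a * 1))) with (k ^ 2 - a ^ 2) by ring. field. lra.
Qed.

Lemma is_derive_angle : is_derive (angle a) k (a / (k * side a k)).
Proof.
  destruct gain_bounds as [Hak Hk0]. pose proof ratio_bounds as Hr.
  destruct polar as (th & Hth & Ea & Es & _).
  assert (Hacos : is_derive acos (a / k) (-1 / sqrt (1 - (a / k)²))).
  { apply is_derive_Reals. apply derive_pt_eq_1 with (derivable_pt_acos _ Hr).
    apply derive_pt_acos. }
  assert (Hinv : is_derive (fun x => a / x) k (- a / k ^ 2)).
  { auto_derive; [lra|]. field. lra. }
  pose proof (is_derive_comp acos (fun x => a / x) k _ _ Hacos Hinv) as K.
  rewrite <- sin_acos in K by lra. fold (angle a k) in K. rewrite Ea in K.
  assert (0 < sin th) by (apply sin_gt_0; lra).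
  rewrite Es. replace (a / (k * (k * sin th))) with (- a / k ^ 2 * (-1 / sin th))
    by (field; lra).
  exact K.
Qed.

Lemma is_derive_delay : is_derive (delay a) k (delay' a k).
Proof.
  destruct gain_bounds. pose proof side_pos.
  unfold delay. auto_derive.
  - repeat split; try (eexists; eauto using is_derive_side, is_derive_angle). lra.
  - replace (Derive (fun x => side a x) k) with (k / side a k)
      by (symmetry; apply is_derive_unique, is_derive_side).
    replace (Derive (fun x => angle a x) k) with (a / (k * side a k))
      by (symmetry; apply is_derive_unique, is_derive_angle).
    unfold delay'. field. lra.
Qed.

Lemma is_derive_delay' : is_derive (delay' a) k (delay'' a k).
Proof.
  destruct gain_bounds. pose proof side_pos.
  unfold delay'. auto_derive.
  - repeat split; try (eexists; eauto using is_derive_side, is_derive_angle);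
    apply Rgt_not_eq; repeat apply Rmult_lt_0_compat; lra.
  - replace (Derive (fun x => side a x) k) with (k / side a k)
      by (symmetry; apply is_derive_unique, is_derive_side).
    replace (Derive (fun x => angle a x) k) with (a / (k * side a k))
      by (symmetry; apply is_derive_unique, is_derive_angle).
    unfold delay''. field. lra.
Qed.

Lemma delay'_neg : delay' a k < 0.
Proof.
  destruct gain_bounds as [_ Hk0].
  unfold delay'. destruct polar as (th & Hth & -> & -> & ->).
  assert (0 < sin th) by (apply sin_gt_0; lra).
  pose proof (sin_lt_x th ltac:(lra)). pose proof (COS_bound th).
  replace (k * cos th / (k * (k * sin th) ^ 2) - th * k / (k * sin th) ^ 3)
    with ((sin th * cos th - th) / (k ^ 2 * sin th ^ 3)) by (field; lra).
  apply Rdiv_neg_pos; [nra|]. apply Rmult_lt_0_compat; apply pow_lt; lra.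
Qed.

Lemma delay''_pos : 0 < delay'' a k.
Proof.
  destruct gain_bounds as [_ Hk0].
  unfold delay''. destruct polar as (th & Hth & -> & -> & ->).
  assert (0 < sin th) by (apply sin_gt_0; lra).
  pose proof (delay''_numerator_pos th Hth).
  match goal with |- 0 < ?e => replace e with
    ((th * (3 - sin th ^ 2) - sin th * cos th * (3 + sin th ^ 2)) / (k ^ 3 * sin th ^ 5))
    by (field; lra) end.
  apply Rdiv_lt_0_compat; [lra|]. apply Rmult_lt_0_compat; apply pow_lt; lra.
Qed.

Lemma delay_pos : 0 < delay a k.
Proof.
  destruct gain_bounds as [_ Hk0].
  unfold delay. destruct polar as (th & Hth & -> & -> & _).
  assert (0 < sin th) by (apply sin_gt_0; lra).
  apply Rdiv_lt_0_compat; nra.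
Qed.

Lemma inv_lt_delay : / k < delay a k.
Proof.
  destruct gain_bounds as [_ Hk0].
  unfold delay. destruct polar as (th & Hth & -> & -> & _).
  assert (0 < sin th) by (apply sin_gt_0; lra).
  pose proof (sin_lt_x th ltac:(lra)).
  apply Rmult_lt_reg_r with (k * sin th); [nra|].
  replace (/ k * (k * sin th)) with (sin th) by (field; lra).
  replace (th / (k * sin th) * (k * sin th)) with th by (field; lra). lra.
Qed.

Lemma delay_lt_inv : 0 < a -> delay a k < / a.
Proof.
  destruct gain_bounds as [_ Hk0].
  unfold delay. destruct polar as (th & Hth & -> & -> & ->). intros Ha.
  assert (0 < sin th) by (apply sin_gt_0; lra).
  assert (0 < cos th) by (apply Rmult_lt_reg_l with k; lra).
  pose proof (x_cos_lt_sin th Hth).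
  apply Rmult_lt_reg_r with (k * sin th * (k * cos th));
    [repeat apply Rmult_lt_0_compat; lra|].
  replace (th / (k * sin th) * (k * sin th * (k * cos th))) with (k * (th * cos th))
    by (field; lra).
  replace (/ (k * cos th) * (k * sin th * (k * cos th))) with (k * sin th)
    by (field; nra).
  nra.
Qed.

Lemma angle_ge_PI2 : a <= 0 -> PI / 2 <= angle a k.
Proof.
  destruct gain_bounds as [_ Hk0].
  destruct polar as (th & Hth & -> & _ & ->). intros Ha.
  destruct (Rle_lt_dec (PI / 2) th) as [|Hlt]; [auto|].
  assert (0 < cos th) by (apply cos_gt_0; lra). nra.
Qed.

End Polar.

Lemma delay_decreasing a x y : Rabs a < x -> x < y -> delay a y < delay a x.
Proof.
  intros Hx Hxy.
  enough (- delay a x < - delay a y) by lra.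
  apply (incr_function (fun k => - delay a k) (Rabs a) p_infty (fun k => - delay' a k));
    simpl; auto.
  - intros k Hk _. apply (is_derive_opp (delay a)), is_derive_delay, Hk.
  - intros k Hk _. pose proof (delay'_neg a k Hk). lra.
Qed.

Lemma delay_lt_delay a x y : Rabs a < x -> Rabs a < y ->
  delay a x < delay a y <-> y < x.
Proof.
  intros Hx Hy. split; [|apply delay_decreasing; auto].
  intros Hlt. destruct (Rtotal_order y x) as [|[->|Hxy]]; [auto|lra|].
  pose proof (delay_decreasing a x y Hx Hxy). lra.
Qed.

Lemma delay_le_delay a x y : Rabs a < x -> Rabs a < y ->
  delay a x <= delay a y <-> y <= x.
Proof.
  intros Hx Hy. pose proof (delay_lt_delay a y x Hy Hx). split.
  - intros Hle. destruct (Rle_lt_dec y x); [auto|]. lra.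
  - intros Hle. destruct (Rle_lt_dec (delay a x) (delay a y)); [auto|]. lra.
Qed.

Lemma delay_inj a x y : Rabs a < x -> Rabs a < y -> delay a x = delay a y -> x = y.
Proof.
  intros Hx Hy E. apply Rle_antisym.
  - apply (delay_le_delay a y x Hy Hx). lra.
  - apply (delay_le_delay a x y Hx Hy). lra.
Qed.

Lemma delay_convex a x y t : Rabs a < x -> Rabs a < y -> 0 <= t <= 1 ->
  delay a (t * x + (1 - t) * y) <= t * delay a x + (1 - t) * delay a y.
Proof.
  apply (convex_of_derive_increasing (delay a) (delay' a) (Rabs a)).
  - intros k Hk. apply is_derive_delay, Hk.
  - intros u v Hu Huv.
    apply (incr_function (delay' a) (Rabs a) p_infty (delay'' a)); simpl; auto.
    + intros k Hk _. apply is_derive_delay', Hk.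
    + intros k Hk _. apply delay''_pos, Hk.
Qed.

Lemma delay_continuous a k : Rabs a < k -> continuity_pt (delay a) k.
Proof.
  intros Hk. apply derivable_continuous_pt. exists (delay' a k).
  apply is_derive_Reals, is_derive_delay, Hk.
Qed.

Lemma exists_gain_with_side a x : 0 < x -> exists k, Rabs a < k /\ side a k = x.
Proof.
  intros Hx. exists (sqrt (a ^ 2 + x ^ 2)). split.
  - rewrite <- (sqrt_pow2 (Rabs a)) by apply Rabs_pos.
    apply sqrt_lt_1; [apply pow2_ge_0 | nra | rewrite pow2_abs; nra].
  - unfold side. rewrite pow2_sqrt by nra.
    replace (a ^ 2 + x ^ 2 - a ^ 2) with (x ^ 2) by ring. apply sqrt_pow2. lra.
Qed.

Lemma delay_surjective a T : admissible a T -> exists k, Rabs a < k /\ delay a k = T.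
Proof.
  intros [HT HaT]. pose proof PI_RGT_0.
  assert (Hlow : exists k1, Rabs a < k1 /\ T <= delay a k1).
  { destruct (Rlt_le_dec 0 a) as [Ha|Ha].
    - assert (Hk1 : Rabs a < / T).
      { rewrite Rabs_right by lra. apply Rmult_lt_reg_r with T; auto.
        rewrite Rinv_l; lra. }
      exists (/ T). split; auto.
      pose proof (inv_lt_delay a (/ T) Hk1). rewrite Rinv_inv in *. lra.
    - destruct (exists_gain_with_side a (PI / (2 * T))) as [k1 [Hk1 Hs]].
      { apply Rdiv_lt_0_compat; lra. }
      exists k1. split; auto. pose proof (angle_ge_PI2 a k1 Hk1 Ha).
      unfold delay. rewrite Hs.
      replace T with ((PI / 2) / (PI / (2 * T))) at 1 by (field; lra).
      apply Rmult_le_compat_r; [|lra]. left; apply Rinv_0_lt_compat, Rdiv_lt_0_compat; lra. }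
  assert (Hup : exists k2, Rabs a < k2 /\ delay a k2 < T).
  { destruct (exists_gain_with_side a (PI / T)) as [k2 [Hk2 Hs]].
    { apply Rdiv_lt_0_compat; lra. }
    exists k2. split; auto. pose proof (angle_range a k2 Hk2).
    unfold delay. rewrite Hs.
    replace T with (PI / (PI / T)) at 2 by (field; lra).
    apply Rmult_lt_compat_r; [|lra]. apply Rinv_0_lt_compat, Rdiv_lt_0_compat; lra. }
  destruct Hlow as [k1 [Hk1 Hlow]], Hup as [k2 [Hk2 Hup]].
  destruct (Req_dec (delay a k1) T) as [E|NE]; [exists k1; auto|].
  assert (Hk12 : k1 < k2) by (apply (delay_lt_delay a k2 k1); lra).
  destruct (Ranalysis5.IVT_interv (fun k => T - delay a k) k1 k2) as [k [Hk E]];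
    auto; try lra.
  - intros k Hk. apply continuity_pt_minus; [apply continuity_pt_const; intros ? ?; auto|].
    apply delay_continuous. lra.
  - exists k. split; lra.
Qed.

Lemma admissible_convex a T1 T2 t : admissible a T1 -> admissible a T2 -> 0 <= t <= 1 ->
  admissible a (t * T1 + (1 - t) * T2).
Proof.
  intros [P1 Q1] [P2 Q2] Ht. split.
  - destruct (Req_dec t 0) as [->|]; [lra|]. nra.
  - replace (a * (t * T1 + (1 - t) * T2)) with (t * (a * T1) + (1 - t) * (a * T2)) by ring.
    destruct (Rle_dec (a * T1) (a * T2)); nra.
Qed.

Lemma admissible_of_lt_inv a T : 0 < a -> 0 < T -> T < / a -> admissible a T.
Proof.
  intros Ha HT HTa. split; [auto|].
  apply Rlt_le_trans with (a * / a); [apply Rmult_lt_compat_l; lra|].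
  rewrite Rinv_r; lra.
Qed.

Section Inverse.
Variables (a : R) (ku : R -> R).
Hypothesis ku_inverse : forall T, admissible a T -> Rabs a < ku T /\ delay a (ku T) = T.

Lemma ku_lt_iff T K : admissible a T -> Rabs a < K -> ku T < K <-> delay a K < T.
Proof.
  intros HT HK. destruct (ku_inverse T HT) as [Hk E].
  pose proof (delay_lt_delay a K (ku T) HK Hk) as L. rewrite E in L. tauto.
Qed.

Lemma lt_ku_iff T K : admissible a T -> Rabs a < K -> K < ku T <-> T < delay a K.
Proof.
  intros HT HK. destruct (ku_inverse T HT) as [Hk E].
  pose proof (delay_lt_delay a (ku T) K Hk HK) as L. rewrite E in L. tauto.
Qed.

Lemma ku_le_iff T K : admissible a T -> Rabs a < K -> ku T <= K <-> delay a K <= T.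
Proof.
  intros HT HK. destruct (ku_inverse T HT) as [Hk E].
  pose proof (delay_le_delay a K (ku T) HK Hk) as L. rewrite E in L. tauto.
Qed.

Lemma ku_decreasing T1 T2 : admissible a T1 -> admissible a T2 -> T1 < T2 ->
  ku T2 < ku T1.
Proof.
  intros H1 H2 Hlt. destruct (ku_inverse T1 H1) as [Hk1 E1].
  apply ku_lt_iff; auto. lra.
Qed.

Lemma ku_convex T1 T2 t : admissible a T1 -> admissible a T2 -> 0 <= t <= 1 ->
  ku (t * T1 + (1 - t) * T2) <= t * ku T1 + (1 - t) * ku T2.
Proof.
  intros H1 H2 Ht.
  destruct (ku_inverse T1 H1) as [Hk1 E1], (ku_inverse T2 H2) as [Hk2 E2].
  assert (Hmid : Rabs a < t * ku T1 + (1 - t) * ku T2).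
  { destruct (Req_dec t 0) as [->|]; [lra|]. nra. }
  apply ku_le_iff; auto using admissible_convex.
  eapply Rle_trans; [apply delay_convex; eauto|]. rewrite E1, E2. lra.
Qed.

Lemma ku_at_right_0 : filterlim ku (at_right 0) (Rbar_locally p_infty).
Proof.
  intros P [M HM].
  set (K := Rmax M (Rabs a) + 1).
  assert (HK : Rabs a < K) by (unfold K; pose proof (Rmax_r M (Rabs a)); lra).
  exists (mkposreal _ (delay_pos a K HK)). intros T HTb HT0.
  change (Rabs (T - 0) < delay a K) in HTb.
  rewrite Rminus_0_r, Rabs_right in HTb by lra.
  assert (HT : admissible a T).
  { destruct (Rlt_le_dec 0 a) as [Ha|Ha]; [|split; nra].
    apply admissible_of_lt_inv; auto. pose proof (delay_lt_inv a K HK Ha). lra. }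
  apply HM. apply (lt_ku_iff T K HT HK) in HTb.
  unfold K in HTb. pose proof (Rmax_l M (Rabs a)). lra.
Qed.

Lemma ku_at_left_inv : 0 < a -> filterlim ku (at_left (/ a)) (locally a).
Proof.
  intros Ha. apply filterlim_locally. intros eps.
  assert (HK : Rabs a < a + eps) by (rewrite Rabs_right by lra; destruct eps; simpl; lra).
  pose proof (delay_lt_inv a _ HK Ha). pose proof (delay_pos a _ HK).
  assert (Hd : 0 < / a - delay a (a + eps)) by lra.
  exists (mkposreal _ Hd). intros T HTb HTl.
  change (Rabs (T - / a) < / a - delay a (a + eps)) in HTb. apply Rabs_def2 in HTb.
  assert (HT : admissible a T) by (apply admissible_of_lt_inv; auto; lra).
  destruct (ku_inverse T HT) as [Hk _]. rewrite Rabs_right in Hk by lra.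
  assert (ku T < a + eps) by (apply ku_lt_iff; auto; lra).
  change (Rabs (ku T - a) < eps). apply Rabs_def1; destruct eps; simpl in *; lra.
Qed.

Lemma ku_at_infty : a < 0 -> filterlim ku (Rbar_locally p_infty) (locally (Rabs a)).
Proof.
  intros Ha. apply filterlim_locally. intros eps.
  assert (HK : Rabs a < Rabs a + eps) by (destruct eps; simpl; lra).
  pose proof (delay_pos a _ HK).
  exists (delay a (Rabs a + eps)). intros T HTb.
  assert (HT : admissible a T) by (split; nra).
  destruct (ku_inverse T HT) as [Hk _].
  assert (ku T < Rabs a + eps) by (apply ku_lt_iff; auto).
  change (Rabs (ku T - Rabs a) < eps). apply Rabs_def1; destruct eps; simpl in *; lra.
Qed.

End Inverse.

Theorem proposition2 (a : R) :
  (forall T, admissible a T -> exists! k, ku_spec a T k) /\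
  (forall ku : R -> R,
     (forall T, admissible a T -> ku_spec a T (ku T)) ->
     (forall T1 T2, admissible a T1 -> admissible a T2 -> T1 < T2 ->
        ku T2 < ku T1) /\
     (forall T1 T2 t, admissible a T1 -> admissible a T2 -> 0 <= t <= 1 ->
        ku (t * T1 + (1 - t) * T2) <= t * ku T1 + (1 - t) * ku T2) /\
     (0 < a ->
        filterlim ku (at_left (/ a)) (locally a) /\
        filterlim ku (at_right 0) (Rbar_locally p_infty)) /\
     (a < 0 ->
        filterlim ku (Rbar_locally p_infty) (locally (Rabs a)) /\
        filterlim ku (at_right 0) (Rbar_locally p_infty))).
Proof.
  split.
  - intros T HT. destruct (delay_surjective a T HT) as [k [Hk E]].
    exists k. split; [apply ku_spec_iff; auto|].
    intros k' Hk'. apply ku_spec_iff in Hk' as [Hk' E'].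
    apply (delay_inj a); congruence.
  - intros ku Hku.
    assert (Hinv : forall T, admissible a T -> Rabs a < ku T /\ delay a (ku T) = T)
      by (intros T HT; apply ku_spec_iff, Hku, HT).
    repeat split; intros.
    + apply (ku_decreasing a); auto.
    + apply (ku_convex a); auto.
    + apply (ku_at_left_inv a); auto.
    + apply (ku_at_right_0 a), Hinv.
    + apply (ku_at_infty a); auto.
    + apply (ku_at_right_0 a), Hinv.
Qed.
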